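(* Let $A\in\mathrm{SL}(2,\mathbb R)$ and $\tau>0$ with $A\Lambda_q\cap S_\tau\ne\emptyset$, and let $(\mathbf u_n=(q_n,a_n)^T)_{n\ge0}$ be elements of $A\Lambda_q\cap S_\tau$ with successive slopes, i.e. for each $n$, $\mathbf u_{n+1}$ is the element of $A\Lambda_q\cap S_\tau$ of smallest slope strictly greater than $a_n/q_n$. Then $s_{1/\tau}h_{a_0/q_0}A\Lambda_q$ contains the horizontal vector $(q_0/\tau,0)^T\in S_1$, and hence equals $g_{a,b}\Lambda_q$ for a unique $(a,b)\in\mathscr T^q$. Moreover: (1) for each $n\ge0$, $s_{1/\tau}h_{a_n/q_n}A\Lambda_q$ contains the horizontal vector $(q_n/\tau,0)^T\in S_1$ and $s_{1/\tau}h_{a_n/q_n}A\Lambda_q=g_{\mathrm{BCZ}_q^n(a,b)}\Lambda_q$; i.e. $\mathrm{FTR}_q(A,\tau,\mathbf u_n)=\mathrm{BCZ}_q^n(\mathrm{FTR}_q(A,\tau,\mathbf u_0))$; (2) writing $L_n^q(a,b)$ for the first coordinate of $\mathrm{BCZ}_q^n(a,b)$, we have $q_n=\tau L_n^q(a,b)=\tau L_0^q(\mathrm{BCZ}_q^n(a,b))$, and for all $n\ge0$ $$a_{n+1}=q_{n+1}\left(\frac{a_n}{q_n}+\frac1{\tau^2}R_q(\mathrm{BCZ}_q^n(a,b))\right).$$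
   Context: Fix an integer $q\ge3$, let $\lambda_q=2\cos(\pi/q)$, and let $G_q\subset \mathrm{SL}(2,\mathbb R)$ be the Hecke triangle group generated by $S=\begin{pmatrix}0&-1\\1&0\end{pmatrix}$ and $T_q=\begin{pmatrix}1&\lambda_q\\0&1\end{pmatrix}$, acting linearly on $\mathbb R^2$; $\Lambda_q=G_q(1,0)^T$, $A\Lambda_q=\{A\mathbf v:\mathbf v\in\Lambda_q\}$. Matrices: $h_s=\begin{pmatrix}1&0\\-s&1\end{pmatrix}$, $s_\tau=\begin{pmatrix}\tau&0\\0&\tau^{-1}\end{pmatrix}$, $g_{a,b}=\begin{pmatrix}a&b\\0&a^{-1}\end{pmatrix}$, with $g_{(a,b)}:=g_{a,b}$. $S_\tau=\{(x,y)^T:0<x\le\tau\}$; slope of $(x,y)^T$ with $x\ne0$ is $y/x$. $\mathscr T^q=\{(a,b):0<a\le1,\ 1-\lambda_qa<b\le1\}$. Facts (established earlier): for every $(a,b)\in\mathscr T^q$, $g_{a,b}\Lambda_q\cap S_1$ contains a vector of smallest positive slope, denoted $R_q(a,b)$ (the $G_q$-roof function); and whenever $B\Lambda_q$ ($B\in\mathrm{SL}(2,\mathbb R)$) contains a horizontal vector $(c,0)^T$ with $0<c\le1$ there is a unique $(a',b')\in\mathscr T^q$ with $B\Lambda_q=g_{a',b'}\Lambda_q$, and $a'=c$. The $G_q$-BCZ map $\mathrm{BCZ}_q:\mathscr T^q\to\mathscr T^q$ sends $(a,b)$ to the unique $(c,d)\in\mathscr T^q$ with $h_{R_q(a,b)}g_{a,b}\Lambda_q=g_{c,d}\Lambda_q$.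 For $\mathbf u\in A\Lambda_q\cap S_\tau$, the Farey triangle representative $\mathrm{FTR}_q(A,\tau,\mathbf u)$ is the unique $(a,b)\in\mathscr T^q$ with $s_{1/\tau}h_{\mathrm{slope}(\mathbf u)}A\Lambda_q=g_{a,b}\Lambda_q$. *)

From Stdlib Require Import Reals Lra Lia ClassicalEpsilon.
Open Scope R_scope.

Record M2 := mkM2 { m11 : R; m12 : R; m21 : R; m22 : R }.
Definition vec := (R * R)%type.

Definition mmul (A B : M2) : M2 :=
  mkM2 (m11 A * m11 B + m12 A * m21 B) (m11 A * m12 B + m12 A * m22 B)
       (m21 A * m11 B + m22 A * m21 B) (m21 A * m12 B + m22 A * m22 B).
Definition mapply (A : M2) (v : vec) : vec :=
  (m11 A * fst v + m12 A * snd v, m21 A * fst v + m22 A * snd v).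
Definition det (A : M2) : R := m11 A * m22 A - m12 A * m21 A.
Definition SL2 (A : M2) : Prop := det A = 1.
Definition Id2 : M2 := mkM2 1 0 0 1.

Definition lambda_q (q : nat) : R := 2 * cos (PI / INR q).
Definition Smat : M2 := mkM2 0 (-1) 1 0.
Definition Sinv : M2 := mkM2 0 1 (-1) 0.
Definition Tq (q : nat) : M2 := mkM2 1 (lambda_q q) 0 1.
Definition Tqinv (q : nat) : M2 := mkM2 1 (- lambda_q q) 0 1.

Inductive in_Gq (q : nat) : M2 -> Prop :=
| Gq_id : in_Gq q Id2
| Gq_S : forall M, in_Gq q M -> in_Gq q (mmul Smat M)
| Gq_Sinv : forall M, in_Gq q M -> in_Gq q (mmul Sinv M)
| Gq_T : forall M, in_Gq q M -> in_Gq q (mmul (Tq q) M)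
| Gq_Tinv : forall M, in_Gq q M -> in_Gq q (mmul (Tqinv q) M).

Definition Lambda_q (q : nat) (v : vec) : Prop :=
  exists M, in_Gq q M /\ v = mapply M (1, 0).

Definition InLat (q : nat) (A : M2) (v : vec) : Prop :=
  exists w, Lambda_q q w /\ v = mapply A w.

Definition lat_eq (q : nat) (B C : M2) : Prop :=
  forall v, InLat q B v <-> InLat q C v.

Definition Strip (tau : R) (v : vec) : Prop := 0 < fst v <= tau.
Definition slope (v : vec) : R := snd v / fst v.

Definition hmat (s : R) : M2 := mkM2 1 0 (- s) 1.
Definition smat (tau : R) : M2 := mkM2 tau 0 0 (/ tau).
Definition gmat (p : R * R) : M2 := mkM2 (fst p) (snd p) 0 (/ fst p).

Definition FareyT (q : nat) (p : R * R) : Prop :=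
  0 < fst p <= 1 /\ 1 - lambda_q q * fst p < snd p <= 1.

Definition IsRoof (q : nat) (p : R * R) (r : R) : Prop :=
  (exists v, InLat q (gmat p) v /\ Strip 1 v /\ 0 < slope v /\ slope v = r) /\
  (forall w, InLat q (gmat p) w -> Strip 1 w -> 0 < slope w -> r <= slope w).

Definition Roof (q : nat) (p : R * R) : R :=
  epsilon (inhabits 0) (IsRoof q p).

Definition BCZ (q : nat) (p : R * R) : R * R :=
  epsilon (inhabits p)
    (fun c => FareyT q c /\ lat_eq q (mmul (hmat (Roof q p)) (gmat p)) (gmat c)).

Definition BCZ_iter (q : nat) (n : nat) (p : R * R) : R * R :=
  Nat.iter n (BCZ q) p.

Definition FTRmat (A : M2) (tau : R) (u : vec) : M2 :=
  mmul (smat (/ tau)) (mmul (hmat (slope u)) A).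

Definition FTR (q : nat) (A : M2) (tau : R) (u : vec) : R * R :=
  epsilon (inhabits (0, 0))
    (fun c => FareyT q c /\ lat_eq q (FTRmat A tau u) (gmat c)).

From Stdlib Require Import ZArith Reals Lra Lia ClassicalEpsilon.
Open Scope R_scope.

(* Renormalising the lattice by [u_n] (shear by its slope, rescale by [1/tau])
   makes [u_n] the horizontal vector [(q_n/tau, 0)] and produces the Farey
   triangle representative. Shearing once more by [tau^2] times the slope gap
   makes [u_(n+1)] horizontal, and by the successor property that gap is
   exactly the roof of the current representative: this is the BCZ step.
   Everything rests on uniqueness of Farey representatives, which comes from
   discreteness of [Lambda_q]: both coordinates of each of its vectors are [0]
   or at least [1] in absolute value. This is read off the normal form
   [± U^a S U^(a_1) ... S U^(a_k) e] with [U = T_q S], [U^q = -1], whose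
   entries are nonnegative combinations of the numbers
   [sin (j pi / q) / sin (pi / q)]. *)

Lemma M2_ext (A B : M2) :
  m11 A = m11 B -> m12 A = m12 B -> m21 A = m21 B -> m22 A = m22 B -> A = B.
Proof. destruct A, B; simpl; intros; subst; reflexivity. Qed.

Ltac meq := apply M2_ext; simpl; try ring.

Lemma mmul_assoc A B C : mmul A (mmul B C) = mmul (mmul A B) C.
Proof. destruct A, B, C; meq. Qed.
Lemma mmul_Id_l A : mmul Id2 A = A. Proof. destruct A; meq. Qed.
Lemma mmul_Id_r A : mmul A Id2 = A. Proof. destruct A; meq. Qed.
Lemma mapply_mmul A B v : mapply (mmul A B) v = mapply A (mapply B v).
Proof. destruct A, B, v; unfold mapply, mmul; simpl; f_equal; ring. Qed.
Lemma mapply_Id v : mapply Id2 v = v.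
Proof. destruct v; unfold mapply; simpl; f_equal; ring. Qed.
Lemma det_mmul A B : det (mmul A B) = det A * det B.
Proof. destruct A, B; unfold det, mmul; simpl; ring. Qed.

Definition minv (M : M2) := mkM2 (m22 M) (- m12 M) (- m21 M) (m11 M).

Lemma mmul_minv_r M : det M = 1 -> mmul M (minv M) = Id2.
Proof. destruct M; unfold det; simpl; intro H; meq; lra. Qed.

Definition vscale (e : R) (v : vec) : vec := (e * fst v, e * snd v).

Lemma mapply_vscale M e v : mapply M (vscale e v) = vscale e (mapply M v).
Proof. destruct v; unfold mapply, vscale; simpl; f_equal; ring. Qed.

Lemma vscaleM e f v : vscale e (vscale f v) = vscale (e * f) v.
Proof. destruct v; unfold vscale; simpl; f_equal; ring. Qed.

Lemma vscale1 v : vscale 1 v = v.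
Proof. destruct v; unfold vscale; simpl; f_equal; ring. Qed.

Lemma Gq_mul q M N : in_Gq q M -> in_Gq q N -> in_Gq q (mmul M N).
Proof.
  intros HM HN; induction HM;
    rewrite ?mmul_Id_l, <- ?mmul_assoc; auto; now constructor.
Qed.

Lemma Gq_generator q g :
  g = Smat \/ g = Sinv \/ g = Tq q \/ g = Tqinv q -> in_Gq q g.
Proof.
  intros H; rewrite <- (mmul_Id_r g).
  destruct H as [E|[E|[E|E]]]; subst g; do 2 constructor.
Qed.

Lemma Gq_det q M : in_Gq q M -> det M = 1.
Proof. induction 1; rewrite ?det_mmul, ?IHin_Gq; unfold det; simpl; ring. Qed.

Lemma Gq_inv q M : in_Gq q M -> in_Gq q (minv M).
Proof.
  induction 1.
  - replace (minv Id2) with Id2 by meq. constructor.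
  - replace (minv (mmul Smat M)) with (mmul (minv M) Sinv) by (destruct M; meq).
    apply Gq_mul, Gq_generator; tauto.
  - replace (minv (mmul Sinv M)) with (mmul (minv M) Smat) by (destruct M; meq).
    apply Gq_mul, Gq_generator; tauto.
  - replace (minv (mmul (Tq q) M)) with (mmul (minv M) (Tqinv q))
      by (destruct M; unfold Tqinv, Tq; meq).
    apply Gq_mul, Gq_generator; tauto.
  - replace (minv (mmul (Tqinv q) M)) with (mmul (minv M) (Tq q))
      by (destruct M; unfold Tqinv, Tq; meq).
    apply Gq_mul, Gq_generator; tauto.
Qed.

Lemma Gq_Tpow q k : in_Gq q (mkM2 1 (IZR k * lambda_q q) 0 1).
Proof.
  induction k as [|k IH|k IH] using Z.peano_ind.
  - replace (mkM2 1 (IZR 0 * lambda_q q) 0 1) with Id2 by meq. constructor.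
  - replace (mkM2 1 (IZR (Z.succ k) * lambda_q q) 0 1)
      with (mmul (Tq q) (mkM2 1 (IZR k * lambda_q q) 0 1))
      by (unfold Z.succ, Tq; rewrite plus_IZR; meq).
    now constructor.
  - replace (mkM2 1 (IZR (Z.pred k) * lambda_q q) 0 1)
      with (mmul (Tqinv q) (mkM2 1 (IZR k * lambda_q q) 0 1))
      by (unfold Z.pred, Tqinv; rewrite plus_IZR; meq).
    now constructor.
Qed.

Lemma Lambda_q_Gq q N w : in_Gq q N -> Lambda_q q w -> Lambda_q q (mapply N w).
Proof.
  intros HN (M & HM & ->). exists (mmul N M); split.
  - now apply Gq_mul.
  - now rewrite mapply_mmul.
Qed.

Lemma Lambda_q_e1 q : Lambda_q q (1, 0).
Proof. exists Id2; split; [constructor | now rewrite mapply_Id]. Qed.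

Definition zero_or_ge1 (x : R) := x = 0 \/ 1 <= x.

Lemma zero_or_ge1_add x y : zero_or_ge1 x -> zero_or_ge1 y -> zero_or_ge1 (x + y).
Proof. unfold zero_or_ge1; intros [->|Hx] [->|Hy]; lra. Qed.

Lemma zero_or_ge1_mul x y : zero_or_ge1 x -> zero_or_ge1 y -> zero_or_ge1 (x * y).
Proof. unfold zero_or_ge1; intros [->|Hx] [->|Hy]; try (left; ring). right; nra. Qed.

Lemma Rabs_sign e : e = 1 \/ e = -1 -> Rabs e = 1.
Proof. intros [-> | ->]; unfold Rabs; destruct Rcase_abs; lra. Qed.

Section HeckeDiscreteness.
Variable q : nat.
Hypothesis Hq : (3 <= q)%nat.

Let th := PI / INR q.

Lemma INR_q_ge3 : 3 <= INR q.
Proof. replace 3 with (INR 3) by (simpl; ring). now apply le_INR. Qed.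

Lemma th_bounds : 0 < th <= PI / 3.
Proof.
  pose proof PI_RGT_0; pose proof INR_q_ge3. unfold th; split.
  - apply Rdiv_lt_0_compat; lra.
  - apply Rmult_le_compat_l; [lra|]. apply Rinv_le_contravar; lra.
Qed.

Lemma q_th : INR q * th = PI.
Proof. pose proof INR_q_ge3. unfold th; field; lra. Qed.

Lemma sin_th_pos : 0 < sin th.
Proof. pose proof th_bounds; pose proof PI_RGT_0; apply sin_gt_0; lra. Qed.

Lemma lambda_q_bounds : 0 < lambda_q q < 2.
Proof.
  change (lambda_q q) with (2 * cos th).
  pose proof th_bounds; pose proof PI_RGT_0; pose proof sin_th_pos.
  pose proof (sin2_cos2 th); unfold Rsqr in *.
  assert (0 < cos th) by (apply cos_gt_0; lra).
  assert (cos th < 1) by nra.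
  lra.
Qed.

(* The Chebyshev-type sequence [hs j = sin (j th) / sin th]; the powers of
   [U = T_q S] are [U^j = [[hs (j+1), - hs j], [hs j, - hs (j-1)]]]. *)
Let hs (x : R) := sin (x * th) / sin th.

Lemma hs_rec x : hs (x + 1) = lambda_q q * hs x - hs (x - 1).
Proof.
  unfold hs; change (lambda_q q) with (2 * cos th).
  replace ((x + 1) * th) with (x * th + th) by ring.
  replace ((x - 1) * th) with (x * th - th) by ring.
  rewrite sin_plus, sin_minus. pose proof sin_th_pos. field. lra.
Qed.

Lemma hs_q_sub x : hs (INR q - x) = hs x.
Proof.
  unfold hs. replace ((INR q - x) * th) with (PI - x * th) by (rewrite <- q_th; ring).
  now rewrite sin_PI_x.
Qed.

Lemma hs0 : hs 0 = 0.
Proof. unfold hs; rewrite Rmult_0_l, sin_0; unfold Rdiv; ring. Qed.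
Lemma hs1 : hs 1 = 1.
Proof. unfold hs; rewrite Rmult_1_l; pose proof sin_th_pos; field; lra. Qed.
Lemma hs_m1 : hs (0 - 1) = -1.
Proof.
  unfold hs; replace ((0 - 1) * th) with (- th) by ring; rewrite sin_neg.
  pose proof sin_th_pos; field; lra.
Qed.
Lemma hs_q : hs (INR q) = 0.
Proof. unfold hs; rewrite q_th, sin_PI; unfold Rdiv; ring. Qed.
Lemma hs_q_pred : hs (INR q - 1) = 1.
Proof. now rewrite hs_q_sub, hs1. Qed.
Lemma hs_q_succ : hs (INR q + 1) = -1.
Proof. rewrite hs_rec, hs_q, hs_q_pred; ring. Qed.
Lemma hs_q_pred2 : hs (INR q - 1 - 1) = lambda_q q.
Proof.
  replace (INR q - 1 - 1) with (INR q - (1 + 1)) by ring.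
  rewrite hs_q_sub, hs_rec. replace (1 - 1) with 0 by ring. rewrite hs1, hs0; ring.
Qed.

(* For [th <= j th <= PI - th] one has [sin (j th) >= sin th]. *)
Lemma hs_zero_or_ge1 j : (j <= q)%nat -> zero_or_ge1 (hs (INR j)).
Proof.
  intro Hj. destruct j as [|j]; [left; apply hs0|].
  destruct (Nat.eq_dec (S j) q) as [->|E]; [left; apply hs_q|].
  right. pose proof sin_th_pos; pose proof th_bounds; pose proof PI_RGT_0.
  assert (1 <= INR (S j)) by (apply (le_INR 1); lia).
  assert (INR (S j) <= INR q - 1).
  { replace (INR q - 1) with (INR (q - 1)) by (rewrite minus_INR by lia; reflexivity).
    apply le_INR; lia. }
  assert (INR (S j) * th <= PI - th) by (rewrite <- q_th; nra).
  unfold hs. apply (Rmult_le_reg_r (sin th)); auto.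
  unfold Rdiv; rewrite Rmult_assoc, Rinv_l, Rmult_1_l, Rmult_1_r by lra.
  destruct (Rle_dec (INR (S j) * th) (PI / 2)).
  - apply sin_incr_1; nra.
  - rewrite <- (sin_PI_x (INR (S j) * th)). apply sin_incr_1; nra.
Qed.

Definition Umat := mkM2 (lambda_q q) (-1) 1 0.
Definition Upow (j : nat) := Nat.iter j (mmul Umat) Id2.

Lemma Upow_entries j :
  Upow j = mkM2 (hs (INR j + 1)) (- hs (INR j)) (hs (INR j)) (- hs (INR j - 1)).
Proof.
  induction j as [|j IH].
  - simpl; rewrite Rplus_0_l, hs0, hs1, hs_m1. meq.
  - change (Upow (S j)) with (mmul Umat (Upow j)). rewrite IH, S_INR.
    unfold Umat; apply M2_ext; simpl; rewrite ?Rplus_minus_r.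
    + rewrite (hs_rec (INR j + 1)), Rplus_minus_r; ring.
    + rewrite (hs_rec (INR j)); ring.
    + ring.
    + ring.
Qed.

Lemma mapply_Upow_q v : mapply (Upow q) v = vscale (-1) v.
Proof.
  rewrite Upow_entries, hs_q, hs_q_succ, hs_q_pred.
  destruct v; unfold mapply, vscale; simpl; f_equal; ring.
Qed.

Lemma mapply_Sinv v : mapply Sinv v = vscale (-1) (mapply Smat v).
Proof. destruct v; unfold mapply, vscale; simpl; f_equal; ring. Qed.

Lemma mapply_Tq v : mapply (Tq q) v = mapply Umat (mapply Sinv v).
Proof. destruct v; unfold mapply; simpl; f_equal; ring. Qed.

Lemma mapply_Tqinv v :
  mapply (Tqinv q) v = vscale (-1) (mapply Smat (mapply (Upow (q - 1)) v)).
Proof.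
  rewrite Upow_entries, minus_INR by lia. change (INR 1) with 1.
  replace (INR q - 1 + 1) with (INR q) by ring.
  rewrite hs_q, hs_q_pred, hs_q_pred2.
  destruct v; unfold mapply, vscale; simpl; f_equal; ring.
Qed.

Inductive hecke_word : vec -> Prop :=
| hecke_word_e1 : hecke_word (1, 0)
| hecke_word_e2 : hecke_word (0, 1)
| hecke_word_SU a w : (1 <= a < q)%nat -> hecke_word w ->
    hecke_word (mapply Smat (mapply (Upow a) w)).

Definition hecke_normal (v : vec) : Prop :=
  exists e a w, (e = 1 \/ e = -1) /\ (a < q)%nat /\ hecke_word w /\
    v = vscale e (mapply (Upow a) w).

Lemma hecke_normal_opp v : hecke_normal v -> hecke_normal (vscale (-1) v).
Proof.
  intros (e & a & w & He & Ha & Hw & ->). exists (-1 * e), a, w.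
  repeat split; auto.
  - destruct He as [-> | ->]; [right | left]; ring.
  - now rewrite vscaleM.
Qed.

Lemma hecke_normal_U v : hecke_normal v -> hecke_normal (mapply Umat v).
Proof.
  intros (e & a & w & He & Ha & Hw & ->).
  rewrite mapply_vscale, <- mapply_mmul.
  change (mmul Umat (Upow a)) with (Upow (S a)).
  destruct (Nat.eq_dec (S a) q) as [Eq|Eq].
  - rewrite Eq, mapply_Upow_q, vscaleM. exists (e * -1), 0%nat, w.
    repeat split; auto; try lia.
    + destruct He as [-> | ->]; [right | left]; ring.
    + simpl; now rewrite mapply_Id.
  - exists e, (S a), w; repeat split; auto; lia.
Qed.

Lemma hecke_normal_Upow k v : hecke_normal v -> hecke_normal (mapply (Upow k) v).
Proof.
  induction k as [|k IH]; intro Hv; simpl; [now rewrite mapply_Id|].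
  rewrite mapply_mmul. now apply hecke_normal_U, IH.
Qed.

Lemma mapply_Smat_Smat v : mapply Smat (mapply Smat v) = vscale (-1) v.
Proof. destruct v; unfold mapply, vscale; simpl; f_equal; ring. Qed.

Lemma hecke_normal_S v : hecke_normal v -> hecke_normal (mapply Smat v).
Proof.
  intros (e & a & w & He & Ha & Hw & ->). rewrite mapply_vscale.
  destruct a as [|a].
  - simpl; rewrite mapply_Id. destruct Hw as [| |b w' Hb Hw'].
    + exists e, 0%nat, (0, 1); repeat split; auto; try lia; [constructor|].
      simpl; rewrite mapply_Id; unfold mapply; simpl; f_equal; f_equal; ring.
    + exists (e * -1), 0%nat, (1, 0); repeat split; auto; try lia; [|constructor|].
      * destruct He as [-> | ->]; [right | left]; ring.
      * simpl; rewrite mapply_Id, <- vscaleM; unfold mapply, vscale; simpl.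
        f_equal; f_equal; ring.
    + rewrite mapply_Smat_Smat, vscaleM. exists (e * -1), b, w'.
      repeat split; auto; try lia.
      destruct He as [-> | ->]; [right | left]; ring.
  - exists e, 0%nat, (mapply Smat (mapply (Upow (S a)) w)).
    repeat split; auto; try lia.
    + constructor; auto; lia.
    + simpl; now rewrite mapply_Id.
Qed.

Lemma Lambda_q_hecke_normal v : Lambda_q q v -> hecke_normal v.
Proof.
  intros (M & HM & ->). induction HM; rewrite ?mapply_Id, ?mapply_mmul.
  - exists 1, 0%nat, (1, 0); repeat split; auto; try lia; [constructor|].
    simpl; now rewrite mapply_Id, vscale1.
  - now apply hecke_normal_S.
  - rewrite mapply_Sinv. now apply hecke_normal_opp, hecke_normal_S.
  - rewrite mapply_Tq, mapply_Sinv. now apply hecke_normal_U, hecke_normal_opp, hecke_normal_S.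
  - rewrite mapply_Tqinv. now apply hecke_normal_opp, hecke_normal_S, hecke_normal_Upow.
Qed.

Lemma hs_succ_zero_or_ge1 j : (j < q)%nat -> zero_or_ge1 (hs (INR j + 1)).
Proof. intro Hj. rewrite <- S_INR. apply hs_zero_or_ge1; lia. Qed.

Lemma hecke_word_shape w : hecke_word w ->
  exists s X Y, (s = 1 \/ s = -1) /\ zero_or_ge1 X /\ zero_or_ge1 Y /\
    w = (s * X, - (s * Y)).
Proof.
  induction 1 as [| |a w Ha Hw (s & X & Y & Hs & HX & HY & ->)].
  - exists 1, 1, 0; repeat split; auto; unfold zero_or_ge1; try lra; f_equal; ring.
  - exists (-1), 0, 1; repeat split; auto; unfold zero_or_ge1; try lra; f_equal; ring.
  - assert (Hm : zero_or_ge1 (hs (INR a - 1))).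
    { replace (INR a - 1) with (INR (a - 1)) by (rewrite minus_INR by lia; reflexivity).
      apply hs_zero_or_ge1; lia. }
    pose proof (hs_zero_or_ge1 a ltac:(lia)).
    pose proof (hs_succ_zero_or_ge1 a ltac:(lia)).
    exists (- s), (hs (INR a) * X + hs (INR a - 1) * Y), (hs (INR a + 1) * X + hs (INR a) * Y).
    repeat split; try (apply zero_or_ge1_add; apply zero_or_ge1_mul; auto).
    + destruct Hs as [-> | ->]; [right | left]; ring.
    + rewrite Upow_entries; unfold mapply; simpl; f_equal; ring.
Qed.

Lemma Lambda_q_fst_discrete v : Lambda_q q v -> zero_or_ge1 (Rabs (fst v)).
Proof.
  intro Hv. destruct (Lambda_q_hecke_normal v Hv) as (e & a & w & He & Ha & Hw & ->).
  destruct (hecke_word_shape w Hw) as (s & X & Y & Hs & HX & HY & ->).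
  assert (HZ : zero_or_ge1 (hs (INR a + 1) * X + hs (INR a) * Y)).
  { apply zero_or_ge1_add; apply zero_or_ge1_mul; auto.
    - now apply hs_succ_zero_or_ge1.
    - apply hs_zero_or_ge1; lia. }
  replace (fst (vscale e (mapply (Upow a) (s * X, - (s * Y)))))
    with (e * s * (hs (INR a + 1) * X + hs (INR a) * Y))
    by (rewrite Upow_entries; unfold vscale, mapply; simpl; ring).
  rewrite !Rabs_mult, (Rabs_right (_ + _)) by (destruct HZ; lra).
  rewrite (Rabs_sign e), (Rabs_sign s) by auto.
  now rewrite !Rmult_1_l.
Qed.

End HeckeDiscreteness.

Lemma Lambda_q_snd_discrete q v : (3 <= q)%nat -> Lambda_q q v -> zero_or_ge1 (Rabs (snd v)).
Proof.
  intros Hq Hv. replace (snd v) with (fst (mapply Sinv v))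
    by (destruct v; unfold mapply; simpl; ring).
  apply (Lambda_q_fst_discrete q Hq), Lambda_q_Gq; auto. apply Gq_generator; tauto.
Qed.

Lemma Lambda_q_horizontal q x : (3 <= q)%nat -> Lambda_q q (x, 0) -> Rabs x = 1.
Proof.
  intros Hq Hx. pose proof Hx as (M & HM & E).
  unfold mapply in E; simpl in E; injection E as E1 E2.
  rewrite Rmult_1_r, Rmult_0_r, Rplus_0_r in E1, E2.
  assert (Hdet : x * m22 M = 1)
    by (pose proof (Gq_det q M HM) as D; unfold det in D; rewrite <- E1, <- E2 in D; lra).
  assert (Hcol : Lambda_q q (m12 M, m22 M)).
  { replace (m12 M, m22 M) with (mapply M (mapply Smat (1, 0)))
      by (unfold mapply; simpl; f_equal; ring).
    apply Lambda_q_Gq, Lambda_q_Gq, Lambda_q_e1; auto. apply Gq_generator; tauto. }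
  pose proof (Lambda_q_fst_discrete q Hq _ Hx) as Dx.
  pose proof (Lambda_q_snd_discrete q _ Hq Hcol) as Dy. simpl in Dx, Dy.
  assert (Habs : Rabs x * Rabs (m22 M) = 1) by (rewrite <- Rabs_mult, Hdet; apply Rabs_R1).
  pose proof (Rabs_pos x); pose proof (Rabs_pos (m22 M)).
  destruct Dx as [Dx|Dx]; [rewrite Dx in Habs; lra|].
  destruct Dy as [Dy|Dy]; [rewrite Dy in Habs; lra|].
  nra.
Qed.

(* [T_q^(±1)] keeps height 1, and [|t| >= 1] with [|t| < lambda_q < 2] forces
   [|t - lambda_q| < 1] or [|t + lambda_q| < 1]. *)
Lemma Lambda_q_height_one q t : (3 <= q)%nat ->
  Lambda_q q (t, 1) -> Rabs t < lambda_q q -> t = 0.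
Proof.
  intros Hq Ht Hlt. pose proof (lambda_q_bounds q Hq) as Hl.
  assert (Hshift : forall g, in_Gq q g -> zero_or_ge1 (Rabs (fst (mapply g (t, 1))))).
  { intros g Hg. now apply (Lambda_q_fst_discrete q Hq), Lambda_q_Gq. }
  pose proof (Hshift _ (Gq_generator q (Tq q) ltac:(tauto))) as Dp.
  pose proof (Hshift _ (Gq_generator q (Tqinv q) ltac:(tauto))) as Dm.
  pose proof (Lambda_q_fst_discrete q Hq _ Ht) as D0.
  unfold mapply, Tq, Tqinv, zero_or_ge1 in *; simpl in *.
  revert Dp Dm D0 Hlt. unfold Rabs; repeat destruct Rcase_abs; intros; lra.
Qed.

Lemma lat_eq_sym q B C : lat_eq q B C -> lat_eq q C B.
Proof. intros H v; specialize (H v); tauto. Qed.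
Lemma lat_eq_trans q B C D : lat_eq q B C -> lat_eq q C D -> lat_eq q B D.
Proof. intros H1 H2 v; specialize (H1 v); specialize (H2 v); tauto. Qed.

Lemma InLat_mmul q C B v :
  InLat q (mmul C B) v <-> exists w, InLat q B w /\ v = mapply C w.
Proof.
  split.
  - intros (w & Hw & ->). exists (mapply B w); split; [now exists w | apply mapply_mmul].
  - intros (w & (w0 & Hw0 & ->) & ->). exists w0; split; auto. now rewrite mapply_mmul.
Qed.

Lemma lat_eq_mmul_l q C B B' : lat_eq q B B' -> lat_eq q (mmul C B) (mmul C B').
Proof.
  intros H v. rewrite !InLat_mmul.
  split; intros (w & Hw & ->); exists w; split; auto; now apply H.
Qed.

Lemma lat_eq_mmul_Gq q B N : in_Gq q N -> lat_eq q B (mmul B N).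
Proof.
  intros HN v; split.
  - intros (w & Hw & ->). exists (mapply (minv N) w); split.
    + apply Lambda_q_Gq; auto. now apply Gq_inv.
    + now rewrite <- !mapply_mmul, <- mmul_assoc, mmul_minv_r, mmul_Id_r by now apply (Gq_det q).
  - intros (w & Hw & ->). exists (mapply N w); split.
    + now apply Lambda_q_Gq.
    + apply mapply_mmul.
Qed.

Lemma InLat_gmat q p v : fst p <> 0 -> InLat q (gmat p) v ->
  Lambda_q q (fst v / fst p - snd p * snd v, fst p * snd v).
Proof.
  intros Ha (w & Hw & ->). destruct w as [x y].
  replace (_, _) with (x, y); auto.
  unfold gmat, mapply; simpl; f_equal; field; auto.
Qed.

Lemma InLat_gmat_horizontal q p c : (3 <= q)%nat -> 0 < fst p -> 0 < c ->
  InLat q (gmat p) (c, 0) -> fst p = c.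
Proof.
  intros Hq Ha Hc H. apply InLat_gmat in H; [|lra]. simpl in H.
  rewrite Rmult_0_r, Rminus_0_r, Rmult_0_r in H.
  apply Lambda_q_horizontal in H; auto.
  rewrite Rabs_right in H by (apply Rle_ge, Rlt_le, Rdiv_lt_0_compat; auto).
  apply (Rmult_eq_reg_r (/ fst p)); [|apply Rinv_neq_0_compat; lra].
  rewrite Rinv_r by lra. exact (eq_sym H).
Qed.

Lemma FareyT_lat_eq_inj q p p' : (3 <= q)%nat -> FareyT q p -> FareyT q p' ->
  lat_eq q (gmat p) (gmat p') -> p = p'.
Proof.
  intros Hq Hp Hp' HL. destruct p as [a b], p' as [a' b'].
  unfold FareyT in *; simpl in *.
  assert (Ea : a = a').
  { apply (InLat_gmat_horizontal q (a, b) a' Hq); simpl; try lra. apply HL.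
    exists (1, 0); split; [apply Lambda_q_e1|].
    unfold mapply; simpl; f_equal; ring. }
  subst a'.
  assert (HI : InLat q (gmat (a, b)) (b', / a)).
  { apply HL. exists (0, 1); split.
    - replace (0, 1) with (mapply Smat (1, 0)) by (unfold mapply; simpl; f_equal; ring).
      apply Lambda_q_Gq, Lambda_q_e1. apply Gq_generator; tauto.
    - unfold mapply; simpl; f_equal; ring. }
  apply InLat_gmat in HI; simpl in HI; [|simpl; lra].
  replace (a * / a) with 1 in HI by (field; lra).
  pose proof (lambda_q_bounds q Hq).
  assert (Ht : Rabs (b' / a - b * / a) < lambda_q q).
  { assert (Et : b' - b = a * (b' / a - b * / a)) by (field; lra).
    unfold Rabs; destruct Rcase_abs; nra. }
  apply Lambda_q_height_one in HI; auto.
  f_equal. apply (Rmult_eq_reg_r (/ a)); [lra | apply Rinv_neq_0_compat; lra].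
Qed.

Lemma exists_shift_into (b d : R) : 0 < d -> exists k : Z, 1 - d < b + IZR k * d <= 1.
Proof.
  intro Hd. set (y := (1 - b) / d). exists (up y - 1)%Z.
  destruct (archimed y) as [A1 A2]. rewrite minus_IZR.
  assert (Hy : b + y * d = 1) by (unfold y; field; lra).
  split; nra.
Qed.

Lemma lat_eq_gmat_shift q a b k :
  lat_eq q (gmat (a, b)) (gmat (a, b + IZR k * (a * lambda_q q))).
Proof.
  replace (gmat (a, b + IZR k * (a * lambda_q q)))
    with (mmul (gmat (a, b)) (mkM2 1 (IZR k * lambda_q q) 0 1)) by (unfold gmat; meq).
  apply lat_eq_mmul_Gq, Gq_Tpow.
Qed.

Lemma lat_eq_gmat_of_horizontal q B c : SL2 B -> InLat q B (c, 0) -> c <> 0 ->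
  exists b, lat_eq q B (gmat (c, b)).
Proof.
  intros HB (w & (N & HN & ->) & E) Hc.
  rewrite <- mapply_mmul in E. exists (m12 (mmul B N)).
  assert (HG : det (mmul B N) = 1) by (now rewrite det_mmul, (Gq_det q N HN), HB, Rmult_1_l).
  destruct (mmul B N) as [g11 g12 g21 g22] eqn:EG.
  unfold mapply in E; simpl in E; injection E as E1 E2.
  unfold det in HG; simpl in *.
  replace (gmat (c, g12)) with (mmul B N).
  - now apply lat_eq_mmul_Gq.
  - rewrite EG. unfold gmat; apply M2_ext; simpl; try lra.
    apply (Rmult_eq_reg_l c); auto. rewrite Rinv_r; nra.
Qed.

Lemma Farey_rep_exists q B c : (3 <= q)%nat -> SL2 B -> InLat q B (c, 0) -> 0 < c <= 1 ->
  exists p, FareyT q p /\ lat_eq q B (gmat p).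
Proof.
  intros Hq HB Hc Hc1. pose proof (lambda_q_bounds q Hq).
  destruct (lat_eq_gmat_of_horizontal q B c HB Hc) as [b Hb]; [lra|].
  destruct (exists_shift_into b (c * lambda_q q)) as [k Hk]; [nra|].
  exists (c, b + IZR k * (c * lambda_q q)); split.
  - unfold FareyT; simpl; lra.
  - eapply lat_eq_trans; [exact Hb | apply lat_eq_gmat_shift].
Qed.

Lemma Roof_eq q p r : IsRoof q p r -> Roof q p = r.
Proof.
  intro Hr. unfold Roof.
  destruct (epsilon_spec (inhabits 0) (IsRoof q p) (ex_intro _ r Hr))
    as [(v & Hv & Hs & Hp & <-) Hmin].
  destruct Hr as [(v' & Hv' & Hs' & Hp' & <-) Hmin'].
  apply Rle_antisym; [apply Hmin | apply Hmin']; auto.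
Qed.

Lemma BCZ_eq q p c : (3 <= q)%nat -> FareyT q c ->
  lat_eq q (mmul (hmat (Roof q p)) (gmat p)) (gmat c) -> BCZ q p = c.
Proof.
  intros Hq Hc HL. unfold BCZ.
  destruct (epsilon_spec (inhabits p)
    (fun c => FareyT q c /\ lat_eq q (mmul (hmat (Roof q p)) (gmat p)) (gmat c))
    (ex_intro _ c (conj Hc HL))) as [Hc' HL'].
  apply (FareyT_lat_eq_inj q); auto. eapply lat_eq_trans; [apply lat_eq_sym|]; eauto.
Qed.

Lemma FTR_eq q A tau x c : (3 <= q)%nat -> FareyT q c ->
  lat_eq q (FTRmat A tau x) (gmat c) -> FTR q A tau x = c.
Proof.
  intros Hq Hc HL. unfold FTR.
  destruct (epsilon_spec (inhabits (0, 0))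
    (fun c => FareyT q c /\ lat_eq q (FTRmat A tau x) (gmat c))
    (ex_intro _ c (conj Hc HL))) as [Hc' HL'].
  apply (FareyT_lat_eq_inj q); auto. eapply lat_eq_trans; [apply lat_eq_sym|]; eauto.
Qed.

Definition renorm (tau s : R) : M2 := mmul (smat (/ tau)) (hmat s).

Lemma FTRmat_renorm A tau x : FTRmat A tau x = mmul (renorm tau (slope x)) A.
Proof. apply mmul_assoc. Qed.

Lemma mapply_renorm tau s w : 0 < tau ->
  mapply (renorm tau s) w = (fst w / tau, tau * (snd w - s * fst w)).
Proof. intro Ht; destruct w; unfold mapply; simpl; f_equal; field; lra. Qed.

Lemma slope_renorm tau s w : 0 < tau -> 0 < fst w ->
  slope (mapply (renorm tau s) w) = tau ^ 2 * (slope w - s).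
Proof. intros Ht Hw. rewrite mapply_renorm by auto. unfold slope; simpl; field; lra. Qed.

Lemma Strip_renorm tau s w : 0 < tau -> Strip 1 (mapply (renorm tau s) w) <-> Strip tau w.
Proof.
  intro Ht. rewrite mapply_renorm by auto. unfold Strip; simpl.
  assert (Hdiv : forall x, x / tau = x * / tau) by reflexivity.
  pose proof (Rinv_0_lt_compat tau Ht).
  split; intros [H1 H2]; rewrite ?Hdiv in *; split.
  - nra.
  - apply (Rmult_le_reg_r (/ tau)); auto. rewrite Rinv_r; lra.
  - nra.
  - apply (Rmult_le_reg_r tau); auto. rewrite Rmult_assoc, Rinv_l; lra.
Qed.

Lemma renorm_slope_horizontal tau x : 0 < tau -> fst x <> 0 ->
  mapply (renorm tau (slope x)) x = (fst x / tau, 0).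
Proof. intros Ht Hx. rewrite mapply_renorm by auto. unfold slope; f_equal; field; auto. Qed.

Lemma renorm_succ tau s s' : 0 < tau ->
  mmul (hmat (tau ^ 2 * (s' - s))) (renorm tau s) = renorm tau s'.
Proof. intro Ht. unfold renorm, smat, hmat; meq; field; lra. Qed.

Section SuccessiveSlopes.
Variables (q : nat) (A : M2) (tau : R) (u : nat -> vec).
Hypothesis Hq : (3 <= q)%nat.
Hypothesis HA : SL2 A.
Hypothesis Htau : 0 < tau.
Hypothesis Hu : forall n, InLat q A (u n) /\ Strip tau (u n).
Hypothesis Hsucc : forall n,
  slope (u n) < slope (u (S n)) /\
  (forall w, InLat q A w -> Strip tau w -> slope (u n) < slope w ->
             slope (u (S n)) <= slope w).

Lemma u_fst_pos n : 0 < fst (u n).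
Proof. apply Hu. Qed.

Lemma FTRmat_horizontal n :
  InLat q (FTRmat A tau (u n)) (fst (u n) / tau, 0) /\ Strip 1 (fst (u n) / tau, 0).
Proof.
  pose proof (u_fst_pos n). rewrite <- renorm_slope_horizontal by (auto; lra).
  split.
  - rewrite FTRmat_renorm. apply InLat_mmul. exists (u n); split; auto. apply Hu.
  - apply Strip_renorm; auto. apply Hu.
Qed.

Lemma FTR_spec n :
  FareyT q (FTR q A tau (u n)) /\ lat_eq q (FTRmat A tau (u n)) (gmat (FTR q A tau (u n))).
Proof.
  destruct (FTRmat_horizontal n) as [Hh Hs].
  assert (HSL : SL2 (FTRmat A tau (u n))).
  { unfold SL2, FTRmat in *. rewrite !det_mmul, HA. unfold det; simpl. field; lra. }
  destruct (Farey_rep_exists q _ _ Hq HSL Hh Hs) as (p & Hp & HL).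
  now rewrite (FTR_eq q A tau (u n) p).
Qed.

Lemma FTR_fst n : fst (FTR q A tau (u n)) = fst (u n) / tau.
Proof.
  destruct (FTR_spec n) as [Hp HL]. pose proof (u_fst_pos n).
  apply (InLat_gmat_horizontal q); auto.
  - apply Hp.
  - apply Rdiv_lt_0_compat; auto.
  - apply HL, FTRmat_horizontal.
Qed.

(* Renormalising by [u n], the next vector [u (S n)] becomes the vector of least
   positive slope in [S_1]. *)
Lemma IsRoof_FTR n :
  IsRoof q (FTR q A tau (u n)) (tau ^ 2 * (slope (u (S n)) - slope (u n))).
Proof.
  destruct (FTR_spec n) as [_ HL]. destruct (Hsucc n) as [Hlt Hmin].
  assert (Htau2 : 0 < tau ^ 2) by (apply pow_lt; lra).
  assert (HInLat : forall w, InLat q (gmat (FTR q A tau (u n))) w <->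
            exists x, InLat q A x /\ w = mapply (renorm tau (slope (u n))) x).
  { intro w. rewrite <- (HL w), FTRmat_renorm. apply InLat_mmul. }
  split.
  - exists (mapply (renorm tau (slope (u n))) (u (S n))).
    pose proof (u_fst_pos (S n)).
    rewrite slope_renorm, Strip_renorm by auto.
    repeat split; try apply Hu; try nra.
    apply HInLat. exists (u (S n)); split; auto. apply Hu.
  - intros w Hw Hs Hpos. apply HInLat in Hw as (x & Hx & ->).
    apply Strip_renorm in Hs; auto.
    rewrite slope_renorm in * by (auto; apply Hs).
    assert (slope (u (S n)) <= slope x) by (apply Hmin; auto; nra).
    nra.
Qed.

Lemma Roof_FTR n :
  Roof q (FTR q A tau (u n)) = tau ^ 2 * (slope (u (S n)) - slope (u n)).
Proof. apply Roof_eq, IsRoof_FTR. Qed.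

Lemma FTR_succ n : FTR q A tau (u (S n)) = BCZ q (FTR q A tau (u n)).
Proof.
  symmetry. apply BCZ_eq; auto; [apply FTR_spec|].
  rewrite Roof_FTR.
  eapply lat_eq_trans; [apply lat_eq_mmul_l, lat_eq_sym, FTR_spec|].
  rewrite FTRmat_renorm, mmul_assoc, renorm_succ, <- FTRmat_renorm by auto.
  apply FTR_spec.
Qed.

Lemma FTR_iter n : FTR q A tau (u n) = BCZ_iter q n (FTR q A tau (u 0%nat)).
Proof.
  induction n as [|n IH]; [reflexivity|].
  rewrite FTR_succ, IH. reflexivity.
Qed.

End SuccessiveSlopes.

Theorem mainTheorem8 (q : nat) (A : M2) (tau : R) (u : nat -> vec) :
  (3 <= q)%nat ->
  SL2 A ->
  0 < tau ->
  (exists v, InLat q A v /\ Strip tau v) ->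
  (forall n, InLat q A (u n) /\ Strip tau (u n)) ->
  (forall n,
      slope (u n) < slope (u (S n)) /\
      (forall w, InLat q A w -> Strip tau w -> slope (u n) < slope w ->
                 slope (u (S n)) <= slope w)) ->
  InLat q (FTRmat A tau (u 0%nat)) (fst (u 0%nat) / tau, 0) /\
  Strip 1 (fst (u 0%nat) / tau, 0) /\
  exists ab : R * R,
    FareyT q ab /\ lat_eq q (FTRmat A tau (u 0%nat)) (gmat ab) /\
    (forall c, FareyT q c -> lat_eq q (FTRmat A tau (u 0%nat)) (gmat c) -> c = ab) /\
    FTR q A tau (u 0%nat) = ab /\
    (forall n,
        InLat q (FTRmat A tau (u n)) (fst (u n) / tau, 0) /\
        Strip 1 (fst (u n) / tau, 0) /\
        lat_eq q (FTRmat A tau (u n)) (gmat (BCZ_iter q n ab)) /\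
        FTR q A tau (u n) = BCZ_iter q n (FTR q A tau (u 0%nat))) /\
    (forall n,
        fst (u n) = tau * fst (BCZ_iter q n ab) /\
        fst (u n) = tau * fst (BCZ_iter q 0 (BCZ_iter q n ab)) /\
        snd (u (S n)) = fst (u (S n)) *
          (snd (u n) / fst (u n) + / (tau ^ 2) * Roof q (BCZ_iter q n ab))).
Proof.
  intros Hq HA Htau _ Hu Hsucc.
  pose proof (FTRmat_horizontal q A tau u Htau Hu) as Hhor.
  pose proof (FTR_spec q A tau u Hq HA Htau Hu) as Hspec.
  pose proof (FTR_iter q A tau u Hq HA Htau Hu Hsucc) as Hiter.
  split; [apply Hhor|]. split; [apply Hhor|].
  exists (FTR q A tau (u 0%nat)).
  split; [apply Hspec|]. split; [apply Hspec|].
  split; [intros c Hc HL; symmetry; now apply FTR_eq|].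
  split; [reflexivity|]. split.
  - intro n. rewrite <- Hiter. split; [apply Hhor|]. split; [apply Hhor|].
    split; [apply Hspec | reflexivity].
  - intro n. change (BCZ_iter q 0 ?x) with x.
    rewrite <- Hiter, (FTR_fst q A tau u Hq HA Htau Hu).
    split; [field; lra|]. split; [field; lra|].
    rewrite (Roof_FTR q A tau u Hq HA Htau Hu Hsucc).
    pose proof (u_fst_pos q A tau u Hu n). pose proof (u_fst_pos q A tau u Hu (S n)).
    unfold slope. field. repeat split; lra.
Qed.
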